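(* Let $(\mathfrak D,d)$ be a finite metric space, $p\in(1,\infty)$, $\vartheta\in\mathcal P(\mathfrak D)$, $\{\mu_k\}_{k\in\mathbb{N}}\subset\mathcal P(\mathfrak D)$, and for each $k$ let $(\varphi_k,\psi_k)$ be functions on $\mathfrak D$ with $\psi_k=\varphi_k^c$, $\varphi_k=\psi_k^c$ and $W_p^p(\vartheta,\mu_k)=\int\varphi_k\,d\mu_k+\int\psi_k\,d\vartheta$. There is a constant $C_{p,\mathfrak D}>0$, depending only on $p$, $\mathfrak D$ and $d$, such that for every finite $I\subset\mathbb{N}$, \[|G_I(\mu)-G_I(\nu)|\le C_{p,\mathfrak D}W_p(\mu,\nu)\qquad\text{for all }\mu,\nu\in\mathcal P(\mathfrak D),\] where $G_I(\mu):=\max_{k\in I}\big(\int\varphi_k\,d\mu+\int\psi_k\,d\vartheta\big)$.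
   Context: $\mathcal P(\mathfrak D)$: probability measures on $\mathfrak D$; $W_p$: $p$-Wasserstein distance with cost $d^p$; $\varphi^c(x):=\inf_{y\in\mathfrak D}(d(x,y)^p-\varphi(y))$. *)

From HB Require Import structures.
From mathcomp Require Import all_boot all_order all_algebra.
From mathcomp Require Import all_classical all_reals all_analysis.
Set Implicit Arguments. Unset Strict Implicit. Unset Printing Implicit Defensive.
Import Order.TTheory GRing.Theory Num.Theory.
Local Open Scope ring_scope.
Local Open Scope classical_set_scope.

Section Defs.
Variables (R : realType) (T : finType).

Definition is_metric (d : T -> T -> R) : Prop :=
  (forall x y, 0 <= d x y) /\ (forall x y, d x y = 0 <-> x = y) /\
  (forall x y, d x y = d y x) /\ (forall x y z, d x z <= d x y + d y z).

Definition is_prob (mu : T -> R) : Prop :=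
  (forall x, 0 <= mu x) /\ \sum_x mu x = 1.

Definition integ (f : T -> R) (mu : T -> R) : R := \sum_x f x * mu x.

Definition is_coupling (mu nu : T -> R) (pi : T * T -> R) : Prop :=
  (forall z, 0 <= pi z) /\
  (forall x, \sum_y pi (x, y) = mu x) /\ (forall y, \sum_x pi (x, y) = nu y).

Definition Wpp (d : T -> T -> R) (p : R) (mu nu : T -> R) : R :=
  inf [set \sum_z (d z.1 z.2 `^ p) * pi z | pi in [set pi | is_coupling mu nu pi]].

Definition Wp (d : T -> T -> R) (p : R) (mu nu : T -> R) : R :=
  Wpp d p mu nu `^ p^-1.

Definition ctrans (d : T -> T -> R) (p : R) (phi : T -> R) : T -> R :=
  fun x => inf [set d x y `^ p - phi y | y in [set: T]].

Definition G_I (I : seq nat) (phi psi : nat -> T -> R) (theta mu : T -> R) : R :=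
  sup [set integ (phi k) mu + integ (psi k) theta | k in [set k | k \in I]].

End Defs.

(* Since phi = psi^c, phi has oscillation at most D = max d^p.  For a coupling
   pi of mu and nu moving the mass m off the diagonal, the integrals of phi
   against mu and nu differ by at most D m, while the cost of pi is at least
   delta m >= delta m^p, where delta = min_{x <> y} d(x, y)^p and m <= 1.
   Hence mu |-> int phi dmu is (D / delta^(1/p))-Lipschitz for W_p, uniformly
   in phi, and so is a maximum of finitely many such maps. *)
From HB Require Import structures.
From mathcomp Require Import all_boot all_order all_algebra.
From mathcomp Require Import all_classical all_reals all_analysis.
From mathcomp Require Import ring lra.
Import Order.TTheory GRing.Theory Num.Theory.
Local Open Scope ring_scope.
Local Open Scope classical_set_scope.

Section Couplings.
Context {R : realType} {T : finType}.
Implicit Types (mu nu phi : T -> R) (pi : T * T -> R).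

Lemma sum_pair (F : T * T -> R) : \sum_z F z = \sum_x \sum_y F (x, y).
Proof. by rewrite pair_big /=; apply: eq_bigr => -[]. Qed.

Lemma product_coupling {mu nu} :
  is_prob mu -> is_prob nu -> is_coupling mu nu (fun z => mu z.1 * nu z.2).
Proof.
move=> [mu0 mu1] [nu0 nu1]; split; first by move=> z; rewrite mulr_ge0.
by split=> x /=; rewrite -?mulr_sumr -?mulr_suml (nu1, mu1) ?mulr1 ?mul1r.
Qed.

Definition offdiag_mass pi : R := \sum_z pi z * (z.1 != z.2)%:R.

Lemma offdiag_mass_le1 {mu nu pi} :
  is_prob mu -> is_coupling mu nu pi -> offdiag_mass pi <= 1.
Proof.
move=> [_ mu1] [pi0 [pi_mu _]]; rewrite -mu1.
apply: (@le_trans _ _ (\sum_z pi z)).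
  by apply: ler_sum => z _; have := pi0 z; case: (z.1 != z.2) => /=; lra.
by rewrite sum_pair; apply: ler_sum => x _; rewrite pi_mu.
Qed.

Lemma integ_sub_coupling phi {mu nu pi} : is_coupling mu nu pi ->
  integ phi mu - integ phi nu = \sum_z (phi z.1 - phi z.2) * pi z.
Proof.
move=> [_ [pi_mu pi_nu]]; rewrite sum_pair /integ.
have -> : \sum_y phi y * nu y = \sum_x \sum_y phi y * pi (x, y).
  by rewrite exchange_big; apply: eq_bigr => y _; rewrite -pi_nu mulr_sumr.
rewrite -sumrB; apply: eq_bigr => x _.
by rewrite -pi_mu mulr_sumr -sumrB; apply: eq_bigr => y _; rewrite mulrBl.
Qed.

Lemma integ_sub_le_offdiag {D : R} {phi mu nu pi} :
  (forall x y, phi x - phi y <= D) -> is_coupling mu nu pi ->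
  `|integ phi mu - integ phi nu| <= D * offdiag_mass pi.
Proof.
move=> phi_osc pi_cpl; rewrite (integ_sub_coupling phi pi_cpl) mulr_sumr.
apply: (le_trans (ler_norm_sum _ _ _)); apply: ler_sum => z _.
have pi0 := pi_cpl.1 z; rewrite normrM (ger0_norm pi0) mulrCA mulrC.
rewrite ler_wpM2l //; case: eqVneq => [->|_] /=.
  by rewrite subrr normr0 mulr0.
by rewrite mulr1 ler_norml lerNl opprB !phi_osc.
Qed.

End Couplings.

Lemma metric_gt0 (R : realType) (T : finType) (d : T -> T -> R) x y :
  is_metric d -> x != y -> 0 < d x y.
Proof.
move=> [d0 [d_eq0 _]] xy; rewrite lt_neqAle d0 andbT eq_sym.
by apply: contra_neq xy => /d_eq0.
Qed.

Section Transport.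
Context {R : realType} {T : finType} (d : T -> T -> R) (p : R).
Implicit Types (mu nu phi psi : T -> R) (pi : T * T -> R).

Definition transport_cost pi : R := \sum_z d z.1 z.2 `^ p * pi z.

Lemma Wpp_ge (b : R) mu nu : is_prob mu -> is_prob nu ->
  (forall pi, is_coupling mu nu pi -> b <= transport_cost pi) ->
  b <= Wpp d p mu nu.
Proof.
move=> mu_prob nu_prob b_le; apply: lb_le_inf; last by move=> _ [pi /b_le ? <-].
by exists (transport_cost (fun z => mu z.1 * nu z.2)), (fun z => mu z.1 * nu z.2);
  first exact: product_coupling.
Qed.

Lemma ctrans_le psi x y : ctrans d p psi x <= d x y `^ p - psi y.
Proof.
apply: ge_inf; last by exists y.
exists (- \sum_z `|psi z|) => _ [z _ <-].
rewrite -[X in X <= _]add0r lerD ?powR_ge0 // lerN2 (le_trans (ler_norm _)) //.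
by rewrite (bigD1 z) //= lerDl sumr_ge0.
Qed.

Lemma ctrans_osc (D : R) psi : (forall x y, d x y `^ p <= D) ->
  forall x y, ctrans d p psi x - ctrans d p psi y <= D.
Proof.
move=> dD x y; rewrite lerBlDr -lerBlDl.
apply: lb_le_inf; first by exists (d y y `^ p - psi y), y.
move=> _ [z _ <-]; have := ctrans_le psi x z; have := dD x z.
have := powR_ge0 (d y z) p; lra.
Qed.

Hypothesis d_gt0 : forall x y, x != y -> 0 < d x y.

Definition min_cost : R := \big[Order.min/1]_(z : T * T | z.1 != z.2) d z.1 z.2 `^ p.

Lemma min_cost_gt0 : 0 < min_cost.
Proof. by apply/bigmin_gtP; split=> // z /d_gt0; apply: powR_gt0. Qed.

Lemma min_cost_le_offdiag {mu nu pi} : is_coupling mu nu pi ->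
  min_cost * offdiag_mass pi <= transport_cost pi.
Proof.
move=> [pi0 _]; rewrite mulr_sumr; apply: ler_sum => z _.
case: eqVneq => [e|zz] /=; first by rewrite !mulr0 mulr_ge0 ?powR_ge0.
rewrite mulr1 ler_wpM2r //.
by rewrite /min_cost (bigmin_le_cond _ (fun z : T * T => d z.1 z.2 `^ p) zz).
Qed.

Hypothesis p_ge1 : 1 <= p.

Lemma Wp_ge_offdiag (a : R) mu nu : 0 <= a -> is_prob mu -> is_prob nu ->
  (forall pi, is_coupling mu nu pi -> a <= offdiag_mass pi) ->
  min_cost `^ p^-1 * a <= Wp d p mu nu.
Proof.
move=> a0 mu_prob nu_prob a_le.
have p0 : 0 < p by apply: lt_le_trans p_ge1.
have prod_cpl := product_coupling mu_prob nu_prob.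
have a1 : a <= 1 := le_trans (a_le _ prod_cpl) (offdiag_mass_le1 mu_prob prod_cpl).
have ap_le_a : a `^ p <= a.
  have [->|a_neq0] := eqVneq a 0; first by rewrite powR0 ?gt_eqF.
  by apply: ge1r_powR; rewrite // a1 lt_neqAle eq_sym a_neq0 a0.
have cost_ge : min_cost * a `^ p <= Wpp d p mu nu.
  apply: Wpp_ge => // pi pi_cpl; apply: le_trans _ (min_cost_le_offdiag pi_cpl).
  by rewrite ler_wpM2l ?(ltW min_cost_gt0) // (le_trans ap_le_a) ?a_le.
have -> : min_cost `^ p^-1 * a = (min_cost * a `^ p) `^ p^-1.
  by rewrite powRM ?powR_ge0 ?(ltW min_cost_gt0) // -powRrM mulfV ?gt_eqF ?powRr1.
have cost0 : 0 <= min_cost * a `^ p by rewrite mulr_ge0 ?powR_ge0 ?(ltW min_cost_gt0).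
by apply: ge0_ler_powR; rewrite ?invr_ge0 ?(ltW p0) ?nnegrE ?(le_trans cost0).
Qed.

Lemma integ_lipschitz (D : R) phi mu nu : 0 < D ->
  (forall x y, phi x - phi y <= D) -> is_prob mu -> is_prob nu ->
  `|integ phi mu - integ phi nu| <= D / min_cost `^ p^-1 * Wp d p mu nu.
Proof.
move=> D0 phi_osc mu_prob nu_prob.
set a := `|integ phi mu - integ phi nu| / D.
have a_le : forall pi, is_coupling mu nu pi -> a <= offdiag_mass pi.
  by move=> pi /(integ_sub_le_offdiag phi_osc); rewrite ler_pdivrMr // mulrC.
have cD0 : 0 < min_cost `^ p^-1 by apply: powR_gt0 min_cost_gt0.
have -> : `|integ phi mu - integ phi nu| = D / min_cost `^ p^-1 * (min_cost `^ p^-1 * a).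
  by rewrite /a; field; rewrite !gt_eqF.
rewrite ler_wpM2l ?divr_ge0 ?(ltW D0) ?(ltW cD0) //.
by apply: Wp_ge_offdiag; rewrite ?divr_ge0 ?(ltW D0).
Qed.

End Transport.

Section FiniteMax.
Context {R : realType} {A : eqType}.
Implicit Types (I : seq A) (f g : A -> R).

Lemma has_sup_image_seq {I} f : I != [::] -> has_sup [set f k | k in [set k | k \in I]].
Proof.
case: I => [//|k0 I] _; split; first by exists (f k0), k0 => //; exact: mem_head.
exists (\sum_(j <- k0 :: I) `|f j|) => _ [j j_in <-].
by rewrite (le_trans (ler_norm _)) // (big_rem j j_in) /= lerDl sumr_ge0.
Qed.

Lemma sup_image_seq_leD {I f g} {K : R} : I != [::] ->
  (forall k, k \in I -> f k <= g k + K) ->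
  sup [set f k | k in [set k | k \in I]] <= sup [set g k | k in [set k | k \in I]] + K.
Proof.
move=> I_neq0 fg; have [[_ [k0 k0_in _]] _] := has_sup_image_seq f I_neq0.
apply: ge_sup; first by exists (f k0), k0.
move=> _ [k k_in <-]; apply: le_trans (fg k k_in) _; rewrite lerD2r.
by apply: sup_upper_bound; [exact: has_sup_image_seq | exists k].
Qed.

Lemma dist_sup_image_seq_le I f g (K : R) : I != [::] ->
  (forall k, k \in I -> `|f k - g k| <= K) ->
  `|sup [set f k | k in [set k | k \in I]] - sup [set g k | k in [set k | k \in I]]| <= K.
Proof.
move=> I_neq0 fg.
have fg_le k : k \in I -> f k <= g k + K by move/fg; rewrite ler_norml => /andP[]; lra.
have gf_le k : k \in I -> g k <= f k + K by move/fg; rewrite ler_norml => /andP[]; lra.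
have := sup_image_seq_leD I_neq0 fg_le; have := sup_image_seq_leD I_neq0 gf_le.
by rewrite ler_norml => ? ?; apply/andP; split; lra.
Qed.

End FiniteMax.

Theorem lemmaB5 (R : realType) (T : finType) (d : T -> T -> R) (p : R) :
  is_metric d -> 1 < p ->
  exists C : R, 0 < C /\
  forall (theta : T -> R) (mus : nat -> T -> R) (phi psi : nat -> T -> R),
    is_prob theta ->
    (forall k, is_prob (mus k)) ->
    (forall k, psi k = ctrans d p (phi k)) ->
    (forall k, phi k = ctrans d p (psi k)) ->
    (forall k, Wpp d p theta (mus k) = integ (phi k) (mus k) + integ (psi k) theta) ->
    forall (I : seq nat), I != [::] ->
    forall mu nu : T -> R, is_prob mu -> is_prob nu ->
      `|G_I I phi psi theta mu - G_I I phi psi theta nu| <= C * Wp d p mu nu.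
Proof.
move=> d_metric p_gt1.
have d_gt0 x y : x != y -> 0 < d x y by apply: metric_gt0.
pose D := \big[Order.max/1]_(z : T * T) d z.1 z.2 `^ p.
have D_gt0 : 0 < D by apply: lt_le_trans (bigmax_ge_id _ _ _ _).
have dD x y : d x y `^ p <= D by apply: (le_bigmax _ (fun z : T * T => _) (x, y)).
exists (D / min_cost d p `^ p^-1); split.
  by rewrite divr_gt0 // powR_gt0 // min_cost_gt0.
move=> theta mus phi psi _ _ _ phi_ctrans _ I I_neq0 mu nu mu_prob nu_prob.
apply: dist_sup_image_seq_le => // k _; rewrite opprD addrACA subrr addr0.
apply: integ_lipschitz => //; first exact: ltW.
by move=> x y; rewrite phi_ctrans; apply: ctrans_osc.
Qed.
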